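(* Suppose the constraint qualification below holds, let $\{(x^k,y^k,z^k)\}$ be generated by Algorithm G-ADMM-M with parameters $\sigma>0$, $\rho\in(0,2)$, and let $(\bar x,\bar y,\bar z)\in\mathbb{W}^*$. Then for every integer $k\ge0$, $$\Psi_k(\bar x,\bar y,\bar z)-\Psi_{k+1}(\bar x,\bar y,\bar z)\ \ge\ \theta_k+\sigma(2-\rho)\|\mathcal{A}^*x^k+\mathcal{B}^*y^k-c\|^2,$$ where $\Psi_k$ and $\theta_k$ are defined below.
   Context: Let $\mathbb{X},\mathbb{Y},\mathbb{Z}$ be finite-dimensional real Euclidean spaces with inner product $\langle\cdot,\cdot\rangle$ and induced norm $\|\cdot\|$. For a self-adjoint linear operator $\mathcal{G}$, $\|u\|_{\mathcal G}^2:=\langle u,\mathcal G u\rangle$. Let $f_1:\mathbb{X}\to\mathbb{R}$ and $h_1:\mathbb{Y}\to\mathbb{R}$ be convex, continuously differentiable with globally Lipschitz continuous gradients, and $f_2:\mathbb{X}\to(-\infty,+\infty]$, $h_2:\mathbb{Y}\to(-\infty,+\infty]$ closed proper convex. Let $\mathcal{A}:\mathbb{Z}\to\mathbb{X}$, $\mathcal{B}:\mathbb{Z}\to\mathbb{Y}$ be linear with adjoints $\mathcal{A}^*,\mathcal{B}^*$, and $c\in\mathbb{Z}$. The problem is $\min\{f_1(x)+f_2(x)+h_1(y)+h_2(y): \mathcal{A}^*x+\mathcal{B}^*y=c\}$. Let $\Sigma_{f_1}\preceq\widehat\Sigma_{f_1}$ be self-adjoint positive semidefinite operators on $\mathbb{X}$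 with $\tfrac12\|x-x'\|_{\Sigma_{f_1}}^2\le f_1(x)-f_1(x')-\langle x-x',\nabla f_1(x')\rangle\le\tfrac12\|x-x'\|_{\widehat\Sigma_{f_1}}^2$ for all $x,x'$, and likewise $\Sigma_{h_1}\preceq\widehat\Sigma_{h_1}$ on $\mathbb{Y}$ for $h_1$. Constraint qualification: there exists $(x^0,y^0)\in\operatorname{ri}(\operatorname{dom}f_2\times\operatorname{dom}h_2)$ with $\mathcal{A}^*x^0+\mathcal{B}^*y^0=c$. $\mathbb{W}^*$ denotes the set of $(\bar x,\bar y,\bar z)\in\mathbb{X}\times\mathbb{Y}\times\mathbb{Z}$ with $0\in\partial f_2(\bar x)+\nabla f_1(\bar x)+\mathcal{A}\bar z$, $0\in\partial h_2(\bar y)+\nabla h_1(\bar y)+\mathcal{B}\bar z$, $\mathcal{A}^*\bar x+\mathcal{B}^*\bar y=c$. Algorithm G-ADMM-M: choose $\sigma>0$, $\rho\in(0,2)$, self-adjoint positive semidefinite $\mathcal S$ on $\mathbb{X}$ and $\mathcal T$ on $\mathbb{Y}$ such that $\mathcal F:=\widehat\Sigma_{f_1}+\mathcal S+\sigma\mathcal{A}\mathcal{A}^*\succ0$ and $\mathcal H:=\widehat\Sigma_{h_1}+\mathcal T+\sigma\mathcal{B}\mathcal{B}^*\succ0$, and $\widetilde\omega^0=(\widetilde x^0,\widetilde y^0,\widetilde z^0)\in\operatorname{dom}f_2\times\operatorname{dom}h_2\times\mathbb{Z}$. For $k=0,1,2,\dots$: $x^k=\arg\min_x\{f_2(x)+\tfrac12\langle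 x,\mathcal F x\rangle+\langle\nabla f_1(\widetilde x^k)+\sigma\mathcal{A}(\mathcal{A}^*\widetilde x^k+\mathcal{B}^*\widetilde y^k-c+\sigma^{-1}\widetilde z^k)-\mathcal F\widetilde x^k,x\rangle\}$; $z^k=\widetilde z^k+\sigma(\mathcal{A}^*x^k+\mathcal{B}^*\widetilde y^k-c)$; $y^k=\arg\min_y\{h_2(y)+\tfrac12\langle y,\mathcal H y\rangle+\langle\nabla h_1(\widetilde y^k)+\sigma\mathcal{B}(\mathcal{A}^*x^k+\mathcal{B}^*\widetilde y^k-c+\sigma^{-1}z^k)-\mathcal H\widetilde y^k,y\rangle\}$; $\widetilde\omega^{k+1}=\widetilde\omega^k+\rho(\omega^k-\widetilde\omega^k)$ where $\omega^k=(x^k,y^k,z^k)$, $\widetilde\omega^k=(\widetilde x^k,\widetilde y^k,\widetilde z^k)$. Notation: for fixed $(\bar x,\bar y,\bar z)$, $x_e^k:=x^k-\bar x$, $y_e^k:=y^k-\bar y$, $z_e^k:=z^k-\bar z$, $\widetilde x_e^k:=\widetilde x^k-\bar x$, $\widetilde y_e^k:=\widetilde y^k-\bar y$. Define $\Psi_k(\bar x,\bar y,\bar z):=\frac{1}{\sigma\rho}\|z_e^k+\sigma(\rho-1)\mathcal{A}^*x_e^k\|^2+\sigma(2-\rho)\|\mathcal{A}^*x_e^k\|^2+\frac1\rho\|\widetilde x_e^{k+1}\|^2_{\widehat\Sigma_{f_1}+\mathcal S}+\frac1\rho\|\widetilde y_e^{k}\|^2_{\widehat\Sigma_{h_1}+\mathcal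 T}$, $\theta_k:=\|\widetilde x^{k+1}-x^{k+1}\|^2_{\frac12\Sigma_{f_1}-\widehat\Sigma_{f_1}+(2-\rho)(\widehat\Sigma_{f_1}+\mathcal S)}+\|\widetilde y^{k}-y^{k}\|^2_{\frac12\Sigma_{h_1}-\widehat\Sigma_{h_1}+(2-\rho)(\widehat\Sigma_{h_1}+\mathcal T)}$ (here $\|u\|^2_{\mathcal G}:=\langle u,\mathcal G u\rangle$ even if $\mathcal G$ is not semidefinite). *)

(* Euclidean spaces X, Y, Z are modelled
   as column vectors 'cV[R]_n, 'cV[R]_m, 'cV[R]_p with the standard inner
   product; linear operators are matrices, adjoints are transposes. *)
From HB Require Import structures.
From mathcomp Require Import all_boot all_order all_algebra.
From mathcomp Require Import all_classical all_reals all_analysis.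
Set Implicit Arguments. Unset Strict Implicit. Unset Printing Implicit Defensive.
Import Order.TTheory GRing.Theory Num.Theory.
Import numFieldNormedType.Exports.
Local Open Scope classical_set_scope.
Local Open Scope ring_scope.

Section Defs.
Variable R : realType.

Definition inner (N : nat) (u v : 'cV[R]_N) : R := (u^T *m v) 0 0.

Definition sqn (N : nat) (u : 'cV[R]_N) : R := inner u u.

Definition enorm (N : nat) (u : 'cV[R]_N) : R := Num.sqrt (inner u u).

(* ||u||_G^2 := <u, G u>  (G need not be semidefinite) *)
Definition qf (N : nat) (G : 'M[R]_N) (u : 'cV[R]_N) : R := inner u (G *m u).

Definition psd (N : nat) (G : 'M[R]_N) : Prop :=
  G^T = G /\ forall u, 0 <= qf G u.
Definition pd (N : nat) (G : 'M[R]_N) : Prop :=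
  G^T = G /\ forall u, u != 0 -> 0 < qf G u.

Definition convex_fun (N : nat) (f : 'cV[R]_N -> R) : Prop :=
  forall (x y : 'cV[R]_N) (t : R), 0 <= t <= 1 ->
    f (t *: x + (1 - t) *: y) <= t * f x + (1 - t) * f y.

Definition dom (N : nat) (f : 'cV[R]_N -> \bar R) : set 'cV[R]_N :=
  [set x | (f x < +oo)%E].

Definition proper_fun (N : nat) (f : 'cV[R]_N -> \bar R) : Prop :=
  (forall x, (-oo < f x)%E) /\ exists x, (f x < +oo)%E.

Definition convexE_fun (N : nat) (f : 'cV[R]_N -> \bar R) : Prop :=
  forall (x y : 'cV[R]_N) (t : R), 0 < t < 1 ->
    (f (t *: x + (1 - t) *: y)%R <= t%:E * f x + (1 - t)%:E * f y)%E.

Definition closed_fun (N : nat) (f : 'cV[R]_N -> \bar R) : Prop :=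
  forall a : R, closed [set x | (f x <= a%:E)%E].

Definition subgrad (N : nat) (f : 'cV[R]_N -> \bar R) (x v : 'cV[R]_N) : Prop :=
  f x \is a fin_num /\ forall y, (f x + (inner v (y - x))%:E <= f y)%E.

Definition aff_hull (N : nat) (C : set 'cV[R]_N) : set 'cV[R]_N :=
  [set x | exists (k : nat) (c : 'I_k -> 'cV[R]_N) (l : 'I_k -> R),
     (forall i, C (c i)) /\ \sum_(i < k) l i = 1 /\ x = \sum_(i < k) l i *: c i].

Definition rel_int (N : nat) (C : set 'cV[R]_N) : set 'cV[R]_N :=
  [set x | C x /\ exists e : R, 0 < e /\
     forall y, aff_hull C y -> enorm (y - x) < e -> C y].

End Defs.

From HB Require Import structures.
From mathcomp Require Import all_boot all_order all_algebra.
From mathcomp Require Import all_classical all_reals all_analysis.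
From mathcomp Require Import ring lra.
Import Order.TTheory GRing.Theory Num.Theory.
Import numFieldNormedType.Exports.
Local Open Scope classical_set_scope.
Local Open Scope ring_scope.

(* Each block update is a proximal step: pairing its optimality condition with
   the KKT inclusion at (xb, yb, zb) gives a variational inequality in which the
   gradient terms of f1 (resp. h1) are controlled, through the curvature bounds
   and the parallelogram law, by -1/4 |.|^2_Sf + 1/2 |.|^2_Sfh.  The relaxation
   step makes the proximal part |xt - xb|^2_(Sfh + S) decrease by an explicit
   amount, and the multiplier part of Psi telescopes exactly, because
   e_k := z_k - zb + sigma (rho - 1) A^T (x_k - xb) satisfies
   e_(k+1) = e_k + rho sigma (A^T (x_(k+1) - xb) + B^T (y_k - yb)).
   Adding the two variational inequalities to these identities gives the
   descent estimate. *)

Section InnerProduct.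
Context {R : realType} {N : nat}.
Implicit Types (u v w : 'cV[R]_N) (G : 'M[R]_N).

Lemma innerC u v : inner u v = inner v u.
Proof. by rewrite /inner -[u^T *m v]trmxK trmx_mul trmxK mxE. Qed.

Lemma innerDl u v w : inner (u + v) w = inner u w + inner v w.
Proof. by rewrite /inner linearD mulmxDl mxE. Qed.

Lemma innerZl a u w : inner (a *: u) w = a * inner u w.
Proof. by rewrite /inner linearZ -scalemxAl mxE. Qed.

Lemma innerNl u w : inner (- u) w = - inner u w.
Proof. by rewrite -scaleN1r innerZl mulN1r. Qed.

Lemma innerBl u v w : inner (u - v) w = inner u w - inner v w.
Proof. by rewrite innerDl innerNl. Qed.

Lemma innerDr u v w : inner w (u + v) = inner w u + inner w v.
Proof. by rewrite innerC innerDl !(innerC w). Qed.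

Lemma innerZr a u w : inner w (a *: u) = a * inner w u.
Proof. by rewrite innerC innerZl innerC. Qed.

Lemma innerNr u w : inner w (- u) = - inner w u.
Proof. by rewrite innerC innerNl innerC. Qed.

Lemma innerBr u v w : inner w (u - v) = inner w u - inner w v.
Proof. by rewrite innerDr innerNr. Qed.

Lemma inner_mulmxl P (M : 'M[R]_(N, P)) (u : 'cV[R]_P) v :
  inner (M *m u) v = inner u (M^T *m v).
Proof. by rewrite /inner trmx_mul mulmxA. Qed.

Lemma inner_ext u v : (forall w, inner u w = inner v w) -> u = v.
Proof.
move=> H; apply/matrixP => i j; rewrite (ord1 j).
by have := H (delta_mx i 0); rewrite /inner -!colE !mxE.
Qed.

Lemma inner_sym_mx G u v : G^T = G -> inner u (G *m v) = inner v (G *m u).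
Proof. by move=> GT; rewrite innerC inner_mulmxl GT. Qed.

End InnerProduct.

Ltac expand_inner :=
  do 4 rewrite ?mulmxDr ?mulmxBr ?mulmxDl ?mulmxBl ?mulmxN ?mulNmx
    -?scalemxAr -?scalemxAl ?mulmxA
    ?(innerDl, innerBl, innerNl, innerZl, innerDr, innerBr, innerNr, innerZr).

(* Vector identities are checked by pairing with an arbitrary vector, which
   turns them into scalar ring identities. *)
Ltac col_ring := apply: inner_ext => ?; expand_inner; ring.

Section QuadraticForms.
Context {R : realType} {N : nat}.
Implicit Types (u v w : 'cV[R]_N) (G : 'M[R]_N).

Lemma qfD G1 G2 u : qf (G1 + G2) u = qf G1 u + qf G2 u.
Proof. by rewrite /qf mulmxDl innerDr. Qed.

Lemma qfB G1 G2 u : qf (G1 - G2) u = qf G1 u - qf G2 u.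
Proof. by rewrite /qf mulmxBl innerBr. Qed.

Lemma qfZ a G u : qf (a *: G) u = a * qf G u.
Proof. by rewrite /qf -scalemxAl innerZr. Qed.

Lemma qfBC G u v : qf G (u - v) = qf G (v - u).
Proof. by rewrite -opprB /qf mulmxN innerNl innerNr opprK. Qed.

Lemma qf_parallelogram G u v : G^T = G ->
  qf G (u + v) + qf G (u - v) = 2 * qf G u + 2 * qf G v.
Proof. by move=> GT; rewrite /qf; expand_inner; rewrite (inner_sym_mx _ u v GT); ring. Qed.

Lemma qf_relax {G r} {ut ut' u : 'cV[R]_N} (ub : 'cV[R]_N) :
  G^T = G -> r != 0 -> ut' = ut + r *: (u - ut) ->
  1 / r * qf G (ut - ub) - 1 / r * qf G (ut' - ub)
  = - 2 * inner (G *m (u - ut)) (u - ub) + (2 - r) * qf G (u - ut).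
Proof.
move=> GT r0 ->.
have -> : ut + r *: (u - ut) - ub = (ut - ub) + r *: (u - ut) by rewrite addrAC.
have -> : u - ub = (ut - ub) + (u - ut) by rewrite [RHS]addrC addrA subrK.
move: (ut - ub) (u - ut) => a d.
rewrite /qf; expand_inner.
rewrite !(innerC (G *m d)) (inner_sym_mx _ a d GT).
by field.
Qed.

Definition curvature_bounds (f : 'cV[R]_N -> R) (g : 'cV[R]_N -> 'cV[R]_N) (Sg Sgh : 'M[R]_N) :=
  forall x x', 1/2 * qf Sg (x - x') <= f x - f x' - inner (x - x') (g x')
            /\ f x - f x' - inner (x - x') (g x') <= 1/2 * qf Sgh (x - x').

Lemma grad_three_point {f g Sg Sgh} : psd Sg -> curvature_bounds f g Sg Sgh ->
  forall x xt xb, 1/4 * qf Sg (x - xt) - 1/2 * qf Sgh (x - xt) <= inner (g xt - g xb) (x - xb).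
Proof.
move=> [SgT Sgp] Hb x xt xb.
have [_ up] := Hb x xt; have [low1 _] := Hb xb xt; have [low2 _] := Hb x xb.
have Hpar := qf_parallelogram _ (x - xb) (xb - xt) SgT.
rewrite addrA subrK in Hpar.
have Hpos := Sgp ((x - xb) - (xb - xt)).
have -> : inner (g xt - g xb) (x - xb) =
    inner (x - xt) (g xt) - inner (xb - xt) (g xt) - inner (x - xb) (g xb).
  by rewrite !(innerBl, innerBr) !(innerC (g _)); ring.
lra.
Qed.

End QuadraticForms.

Lemma le0_of_le_mul_small (R : realFieldType) (K q : R) :
  (forall t, 0 < t < 1 -> K <= t * q) -> K <= 0.
Proof.
move=> H; rewrite leNgt; apply/negP => K_gt0.
set Q := `|q| + 1.
have Q_gt0 : 0 < Q by rewrite /Q; have := normr_ge0 q; lra.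
have q_le : q <= Q by rewrite /Q; have := ler_norm q; lra.
have t01 : 0 < K / (Q + K) < 1.
  apply/andP; split; first by apply: divr_gt0; lra.
  by rewrite ltr_pdivrMr; lra.
have := H _ t01.
rewrite mulrAC ler_pdivlMr; last lra.
nra.
Qed.

Section ProximalStep.
Context {R : realType} {N P : nat}.

Lemma prox_argmin_subgrad_le0 {f : 'cV[R]_N -> \bar R} {F : 'M[R]_N} {lin xk xb v} :
  convexE_fun f -> F^T = F ->
  (forall u, (f xk + (1/2 * inner xk (F *m xk) + inner lin xk)%:E
              <= f u + (1/2 * inner u (F *m u) + inner lin u)%:E)%E) ->
  subgrad f xb v -> inner (F *m xk + lin + v) (xk - xb) <= 0.
Proof.
(* Compare xk with the points t xb + (1 - t) xk of the segment and let t -> 0. *)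
move=> cvx FT Hmin [fb Hsg].
pose phi u := 1/2 * inner u (F *m u) + inner lin u.
have phi_segment t : phi (t *: xb + (1 - t) *: xk) =
    phi xk - t * inner (F *m xk + lin) (xk - xb) + t ^+ 2 / 2 * qf F (xk - xb).
  have -> : t *: xb + (1 - t) *: xk = xk - t *: (xk - xb).
    by rewrite scalerBl scale1r scalerBr opprB addrCA.
  rewrite /phi /qf; move: (xk - xb) => d; expand_inner.
  rewrite (innerC (F *m xk) d) (inner_sym_mx _ xk d FT).
  by field.
have fbE := fineK fb; set b := fine (f xb) in fbE.
have Hs := Hsg xk; have Hm := Hmin xb.
rewrite -fbE in Hs Hm.
case E: (f xk) Hs Hm => [a| |] Hs Hm; last first.
- by move: Hs; rewrite -EFinD leeNy_eq.
- by move: Hm; rewrite -EFinD.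
rewrite -!EFinD !lee_fin in Hs Hm.
rewrite innerDl; apply: (@le0_of_le_mul_small _ _ (qf F (xk - xb) / 2)).
move=> t /andP[t_gt0 t_lt1].
have Hc := cvx xb xk t (introT andP (conj t_gt0 t_lt1)).
have Hu : (f xk + (phi xk)%:E <= f (t *: xb + (1 - t) *: xk)%R
                                   + (phi (t *: xb + (1 - t) *: xk))%:E)%E.
  exact: Hmin.
rewrite -fbE E -!EFinM -EFinD in Hc; rewrite E phi_segment in Hu.
have := le_trans Hu (leeD2r _ Hc); rewrite -EFinD lee_fin expr2 => H.
rewrite -(ler_pM2l t_gt0); nra.
Qed.

Lemma prox_block_ineq {f1 : 'cV[R]_N -> R} {gf1 : 'cV[R]_N -> 'cV[R]_N} {f2 : 'cV[R]_N -> \bar R}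
    {Sg Sgh G : 'M[R]_N} {M : 'M[R]_(N, P)} {sigma : R}
    {ut u ub v : 'cV[R]_N} {res w wb : 'cV[R]_P} (d : 'cV[R]_P) :
  sigma != 0 -> convexE_fun f2 -> psd Sg -> G^T = G -> curvature_bounds f1 gf1 Sg Sgh ->
  (forall u' : 'cV[R]_N,
      let F := G + sigma *: (M *m M^T) in
      let lin := gf1 ut + sigma *: (M *m (res + sigma^-1 *: w)) - F *m ut in
      (f2 u + (1/2 * inner u (F *m u) + inner lin u)%:E
        <= f2 u' + (1/2 * inner u' (F *m u') + inner lin u')%:E)%E) ->
  subgrad f2 ub v -> v + gf1 ub + M *m wb = 0 ->
  d = w + sigma *: (res + M^T *m (u - ut)) - wb ->
  inner d (M^T *m (u - ub)) + inner (G *m (u - ut)) (u - ub)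
    <= - (1/4) * qf Sg (u - ut) + 1/2 * qf Sgh (u - ut).
Proof.
move=> s0 cvx HSg GT Hb Hmin sv Hv ->.
have FT : (G + sigma *: (M *m M^T))^T = G + sigma *: (M *m M^T).
  by rewrite linearD /= linearZ /= trmx_mul trmxK GT.
have := prox_argmin_subgrad_le0 cvx FT Hmin sv.
have -> : v = - (gf1 ub + M *m wb) by apply/eqP; rewrite -addr_eq0 addrA Hv.
set L := (X in inner X _ <= 0).
have -> : L = (gf1 ut - gf1 ub) + M *m (w + sigma *: (res + M^T *m (u - ut)) - wb)
              + G *m (u - ut).
  by rewrite /L; apply: inner_ext => t; expand_inner; field.
rewrite 2!innerDl inner_mulmxl.
have := grad_three_point HSg Hb u ut ub.
lra.
Qed.

End ProximalStep.

Lemma multiplier_identity {R : realType} {P : nat} {z z' a a' b : 'cV[R]_P} {s r : R} :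
  s != 0 -> r != 0 -> z' = z + (s * (r - 1)) *: a + s *: a' + (r * s) *: b ->
  1 / (s * r) * sqn (z + (s * (r - 1)) *: a) + s * (2 - r) * sqn a
  - (1 / (s * r) * sqn (z' + (s * (r - 1)) *: a') + s * (2 - r) * sqn a')
  = - 2 * inner z' a' - 2 * inner (z + s *: (a + b)) b + s * (2 - r) * sqn (a + b).
Proof.
move=> s0 r0 ->; rewrite /sqn; expand_inner.
rewrite !(innerC a z) !(innerC a' z) !(innerC b z) !(innerC a' a) !(innerC b a) !(innerC b a').
by field; rewrite s0 r0.
Qed.

Theorem lemma5 (R : realType) (n m p : nat)
  (f1 : 'cV[R]_n -> R) (gf1 : 'cV[R]_n -> 'cV[R]_n) (f2 : 'cV[R]_n -> \bar R)
  (h1 : 'cV[R]_m -> R) (gh1 : 'cV[R]_m -> 'cV[R]_m) (h2 : 'cV[R]_m -> \bar R)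
  (A : 'M[R]_(n, p)) (B : 'M[R]_(m, p)) (c : 'cV[R]_p)
  (Sf Sfh : 'M[R]_n) (Sh Shh : 'M[R]_m)
  (Hf1d : forall x, differentiable f1 x)
  (Hf1g : forall x v, derive f1 x v = inner (gf1 x) v)
  (Hf1c : convex_fun f1) (Hf1cont : continuous gf1)
  (Hf1L : exists L : R, forall x x', enorm (gf1 x - gf1 x') <= L * enorm (x - x'))
  (Hh1d : forall y, differentiable h1 y)
  (Hh1g : forall y v, derive h1 y v = inner (gh1 y) v)
  (Hh1c : convex_fun h1) (Hh1cont : continuous gh1)
  (Hh1L : exists L : R, forall y y', enorm (gh1 y - gh1 y') <= L * enorm (y - y'))
  (Hf2 : closed_fun f2 /\ proper_fun f2 /\ convexE_fun f2)
  (Hh2 : closed_fun h2 /\ proper_fun h2 /\ convexE_fun h2)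
  (HSf : psd Sf) (HSfh : psd Sfh) (HSfle : psd (Sfh - Sf))
  (HSh : psd Sh) (HShh : psd Shh) (HShle : psd (Shh - Sh))
  (Hf1b : forall x x', 1/2 * qf Sf (x - x') <= f1 x - f1 x' - inner (x - x') (gf1 x')
                       /\ f1 x - f1 x' - inner (x - x') (gf1 x') <= 1/2 * qf Sfh (x - x'))
  (Hh1b : forall y y', 1/2 * qf Sh (y - y') <= h1 y - h1 y' - inner (y - y') (gh1 y')
                       /\ h1 y - h1 y' - inner (y - y') (gh1 y') <= 1/2 * qf Shh (y - y'))
  (HCQ : exists (x0 : 'cV[R]_n) (y0 : 'cV[R]_m),
      rel_int [set w : 'cV[R]_(n + m) | exists x y, w = col_mx x y /\ dom f2 x /\ dom h2 y]
              (col_mx x0 y0)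
      /\ A^T *m x0 + B^T *m y0 = c)
  (sigma rho : R) (S : 'M[R]_n) (T : 'M[R]_m)
  (Hsigma : 0 < sigma) (Hrho : 0 < rho < 2) (HS : psd S) (HT : psd T)
  (HF : pd (Sfh + S + sigma *: (A *m A^T)))
  (HH : pd (Shh + T + sigma *: (B *m B^T)))
  (xt x : nat -> 'cV[R]_n) (yt y : nat -> 'cV[R]_m) (zt z : nat -> 'cV[R]_p)
  (Hinit : dom f2 (xt 0%N) /\ dom h2 (yt 0%N))
  (Hx : forall k (u : 'cV[R]_n),
      let F := Sfh + S + sigma *: (A *m A^T) in
      let lin := gf1 (xt k) + sigma *: (A *m (A^T *m xt k + B^T *m yt k - c + sigma^-1 *: zt k))
                 - F *m xt k in
      (f2 (x k) + (1/2 * inner (x k) (F *m x k) + inner lin (x k))%:E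
        <= f2 u + (1/2 * inner u (F *m u) + inner lin u)%:E)%E)
  (Hz : forall k, z k = zt k + sigma *: (A^T *m x k + B^T *m yt k - c))
  (Hy : forall k (u : 'cV[R]_m),
      let H := Shh + T + sigma *: (B *m B^T) in
      let lin := gh1 (yt k) + sigma *: (B *m (A^T *m x k + B^T *m yt k - c + sigma^-1 *: z k))
                 - H *m yt k in
      (h2 (y k) + (1/2 * inner (y k) (H *m y k) + inner lin (y k))%:E
        <= h2 u + (1/2 * inner u (H *m u) + inner lin u)%:E)%E)
  (Hupd : forall k, xt k.+1 = xt k + rho *: (x k - xt k)
                 /\ yt k.+1 = yt k + rho *: (y k - yt k)
                 /\ zt k.+1 = zt k + rho *: (z k - zt k))
  (xb : 'cV[R]_n) (yb : 'cV[R]_m) (zb : 'cV[R]_p)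
  (HW : (exists v, subgrad f2 xb v /\ v + gf1 xb + A *m zb = 0)
        /\ (exists w, subgrad h2 yb w /\ w + gh1 yb + B *m zb = 0)
        /\ A^T *m xb + B^T *m yb = c) :
  forall k : nat,
    let Psi := fun j : nat =>
      1 / (sigma * rho) * sqn ((z j - zb) + (sigma * (rho - 1)) *: (A^T *m (x j - xb)))
      + sigma * (2 - rho) * sqn (A^T *m (x j - xb))
      + 1 / rho * qf (Sfh + S) (xt j.+1 - xb)
      + 1 / rho * qf (Shh + T) (yt j - yb) in
    let theta :=
      qf (1/2 *: Sf - Sfh + (2 - rho) *: (Sfh + S)) (xt k.+1 - x k.+1)
      + qf (1/2 *: Sh - Shh + (2 - rho) *: (Shh + T)) (yt k - y k) in
    Psi k - Psi k.+1 >= theta + sigma * (2 - rho) * sqn (A^T *m x k + B^T *m y k - c).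
Proof.
(* The smoothness, Lipschitz and closedness assumptions, the constraint
   qualification and the definiteness of F and H only ensure that the iterates
   and the KKT point exist; the estimate itself does not use them. *)
move=> k; cbv zeta beta.
case: HW => [[v [sv Hv]] [[w [sw Hw]] Hc]].
case/andP: Hrho => rho_gt0 rho_lt2.
have s0 : sigma != 0 by rewrite gt_eqF.
have r0 : rho != 0 by rewrite gt_eqF.
have GxT : (Sfh + S)^T = Sfh + S by rewrite linearD /= HSfh.1 HS.1.
have GyT : (Shh + T)^T = Shh + T by rewrite linearD /= HShh.1 HT.1.
set a := A^T *m (x k - xb); set a' := A^T *m (x k.+1 - xb); set b := B^T *m (y k - yb).
have residual_eq : A^T *m x k + B^T *m y k - c = a + b by rewrite /a /b -Hc; col_ring.
have zx_eq : z k.+1 - zb = zt k.+1 + sigma *: (A^T *m xt k.+1 + B^T *m yt k.+1 - c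
                                         + A^T *m (x k.+1 - xt k.+1)) - zb.
  by rewrite Hz; col_ring.
have zy_eq : z k - zb + sigma *: (a + b)
           = z k + sigma *: (A^T *m x k + B^T *m yt k - c + B^T *m (y k - yt k)) - zb.
  by rewrite /a /b -Hc; col_ring.
have z_update :
    z k.+1 - zb = z k - zb + (sigma * (rho - 1)) *: a + sigma *: a' + (rho * sigma) *: b.
  by rewrite /a /a' /b Hz; case: (Hupd k) => _ [-> ->]; rewrite Hz -Hc; col_ring.
have x_step := prox_block_ineq _ s0 Hf2.2.2 HSf GxT Hf1b (Hx k.+1) sv Hv zx_eq.
have y_step := prox_block_ineq _ s0 Hh2.2.2 HSh GyT Hh1b (Hy k) sw Hw zy_eq.
have x_relax := qf_relax xb GxT r0 (Hupd k.+1).1.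
have y_relax := qf_relax yb GyT r0 (Hupd k).2.1.
have multiplier_part := multiplier_identity s0 r0 z_update.
rewrite residual_eq !(qfD (_ - _)) !qfB !qfZ !(qfBC _ (xt k.+1) (x k.+1)) !(qfBC _ (yt k) (y k)).
lra.
Qed.
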